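(* Let $R_0\subset\mathcal{D}_0\subset\mathbb{R}^2$ be a closed OU set about $(x_0,y_0)$ with $\lambda(R_0)\in(0,\infty)$, $R_0^X\in(0,\infty)$, $R_0^Y\in(0,\infty)$, written as $R_0=\{(x,y):y_0\le y\le h_0(x),\,x_0\le x\le x_0+R_0^X\}$ for a non-increasing left-continuous $h_0:[x_0,x_0+R_0^X]\to[y_0,y_0+R_0^Y]$ with $h_0(x_0)=y_0+R_0^Y$. Let rectangles $[x_{1i},x_{2i}]\times[y_{1i},y_{2i}]$, $i=1,\dots,n$, be given with $x_0\le x_{1i}\le x_{2i}\le\infty$, $y_0\le y_{1i}\le y_{2i}\le\infty$. Let $x_0<x_1<\cdots<x_{n_{R_0}}<x_{n_{R_0}+1}=x_0+R_0^X$ be the distinct values, sorted, among $x_0$, $x_0+R_0^X$ and those of the numbers $x_{1i}$, $x_{2i}$ (finite ones), $h_0^{-1}(y_{1i})$, $h_0^{-1}(y_{2i})$ (when well defined) that lie in $(x_0,x_0+R_0^X)$. Let $h:[x_0,x_0+R_0^X]\to[y_0,y_0+R_0^Y]$ satisfy: (a) $\int_{x_i}^{x_{i+1}}(h(x)-y_0)\,dx=\lambda(\{(x,y):x_i\le x\le x_{i+1},y\ge y_0\}\cap R_0)$ for $i=0,\dots,n_{R_0}$; (b) $h_0(x_{i+1})\le h(x)\le h_0(x_i+)$ for $x\in(x_i,x_{i+1}]$, $i=0,\dots,n_{R_0}$; (c) $h$ is non-increasing and left-continuous with $h(x_0)=h(x_0+)$. Define $R=\{(x,y):y_0\le y\le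 h(x),\,x_0\le x\le x_0+R_0^X\}$. Then $\lambda(R)=\lambda(R_0)$, $R^X\le R_0^X$, $R^Y\le R_0^Y$, and $\lambda([x_{1i},x_{2i}]\times[y_{1i},y_{2i}]\cap R)=\lambda([x_{1i},x_{2i}]\times[y_{1i},y_{2i}]\cap R_0)$ for all $i=1,\dots,n$.
   Context: Bivariate setting: $\mathcal{D}_0=[x_0,\infty)\times[y_0,\infty)$. A set $K\subset\mathcal{D}_0$ is OU about $(x_0,y_0)$ if $(x,y)\in K$, $x_0\le x'\le x$, $y_0\le y'\le y$ imply $(x',y')\in K$. For an OU set $K$: $K^X=\sup\{x:(x,y_0)\in K\}-x_0$ and $K^Y=\sup\{y:(x_0,y)\in K\}-y_0$. $\lambda$ is Lebesgue measure on $\mathbb{R}^2$. $h_0^{-1}(y)=\sup\{x:h_0(x)\ge y\}$, defined when $\{x:h_0(x)\ge y\}\ne\emptyset$. $h(x+)$ denotes the right limit. *)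

From mathcomp Require Import all_boot all_order all_algebra.
From mathcomp Require Import all_classical all_reals all_analysis.
Set Implicit Arguments. Unset Strict Implicit. Unset Printing Implicit Defensive.
Import Order.TTheory GRing.Theory Num.Theory.
Import numFieldNormedType.Exports.
Local Open Scope classical_set_scope.
Local Open Scope ring_scope.

Definition lam2 {R : realType} (A : set (R * R)) : \bar R :=
  ((@lebesgue_measure R) \x (@lebesgue_measure R))%E
    (A : set (measurableTypeR R * measurableTypeR R)).

Definition integ {R : realType} (a b : R) (f : R -> R) : \bar R :=
  (\int[@lebesgue_measure R]_(x in `[a, b]) (f x)%:E)%E.

Definition D0 {R : realType} (x0 y0 : R) : set (R * R) :=
  [set p | x0 <= p.1 /\ y0 <= p.2].

Definition OU {R : realType} (x0 y0 : R) (K : set (R * R)) : Prop :=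
  K `<=` D0 x0 y0 /\
  forall x y x' y', K (x, y) -> x0 <= x' <= x -> y0 <= y' <= y -> K (x', y').

Definition KX {R : realType} (x0 y0 : R) (K : set (R * R)) : \bar R :=
  (ereal_sup [set x%:E | x in [set x | K (x, y0)]] - x0%:E)%E.
Definition KY {R : realType} (x0 y0 : R) (K : set (R * R)) : \bar R :=
  (ereal_sup [set y%:E | y in [set y | K (x0, y)]] - y0%:E)%E.

Definition region {R : realType} (x0 y0 a : R) (h : R -> R) : set (R * R) :=
  [set p | x0 <= p.1 <= x0 + a /\ y0 <= p.2 <= h p.1].

Definition rect {R : realType} (x1 x2 y1 y2 : \bar R) : set (R * R) :=
  [set p | (x1 <= p.1%:E <= x2)%E /\ (y1 <= p.2%:E <= y2)%E].

(* the set {x in [x0, x0 + a] : h0 x >= y}; h0^{-1}(y) is defined iff it is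
   nonempty, and then h0^{-1}(y) = sup of it *)
Definition hinv_set {R : realType} (x0 a : R) (h0 : R -> R) (y : \bar R) : set R :=
  [set x | x0 <= x <= x0 + a /\ (y <= (h0 x)%:E)%E].
Definition hinv {R : realType} (x0 a : R) (h0 : R -> R) (y : \bar R) : R :=
  sup (hinv_set x0 a h0 y).

Definition nonincr_on {R : realType} (x0 a : R) (h : R -> R) : Prop :=
  forall x x', x0 <= x -> x <= x' -> x' <= x0 + a -> h x' <= h x.

Definition leftcont_on {R : realType} (x0 a : R) (h : R -> R) : Prop :=
  forall x, x0 < x <= x0 + a -> h t @[t --> x^'-] --> h x.

Definition rlim {R : realType} (h : R -> R) (x : R) : R := lim (h t @[t --> x^'+]).

From mathcomp Require Import all_boot all_order all_algebra.
From mathcomp Require Import all_classical all_reals all_analysis measurable_realfun.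
Import Order.TTheory GRing.Theory Num.Theory.
Import numFieldNormedType.Exports.
Local Open Scope classical_set_scope.
Local Open Scope ring_scope.
Set Implicit Arguments. Unset Strict Implicit. Unset Printing Implicit Defensive.

(* By Fubini, [lam2] of a set is the integral of the lengths of its vertical
   sections, so it suffices to compare these integrals slab by slab over the
   partition ]x_i, x_{i+1}[ of [x0, x0 + RX].  Inside a slab no rectangle edge
   x_{1k}, x_{2k} occurs, and no level y_{1k}, y_{2k} crosses the graph of h0,
   since that can only happen at h0^{-1}(y), itself a partition point; by (b)
   the level does not cross the graph of h either.  Hence over a slab the
   section of a rectangle intersected with the hypograph of f = h or f = h0 has
   length 0, y_{2k} - y_{1k}, or f(x) - y_{1k}, and (a) makes the integrals of
   the last two cases agree.  The bounds on R^X and R^Y hold because R lies in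
   [x0, x0 + RX] x [y0, h(x0)]. *)

Section measurability.
Context {R : realType}.
Notation MR := (measurableTypeR R).
Notation leb := (@lebesgue_measure R).

Definition xsec_measure (A : set (R * R)) (x : MR) : \bar R :=
  leb (xsection (A : set (MR * MR)) x).

Lemma lam2E (A : set (R * R)) : lam2 A = (\int[leb]_x xsec_measure A x)%E.
Proof. by []. Qed.

Lemma measurable_xsec_measure (A : set (R * R)) :
  measurable (A : set (MR * MR)) -> measurable_fun [set: MR] (xsec_measure A).
Proof. exact: measurable_fun_xsection. Qed.

Lemma measurable_set_lee (f g : MR * MR -> \bar R) :
  measurable_fun setT f -> measurable_fun setT g ->
  measurable ([set p | (f p <= g p)%E] : set (MR * MR)).
Proof. by move=> mf mg; rewrite -[X in measurable X]setTI; apply: measurable_lee. Qed.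

Lemma measurable_EFin_fst : measurable_fun [set: MR * MR] (fun p => (p.1)%:E : \bar R).
Proof. by apply: measurableT_comp => //; exact: measurable_fst. Qed.

Lemma measurable_EFin_snd : measurable_fun [set: MR * MR] (fun p => (p.2)%:E : \bar R).
Proof. by apply: measurableT_comp => //; exact: measurable_snd. Qed.

Lemma measurable_rect (x1 x2 y1 y2 : \bar R) :
  measurable (rect x1 x2 y1 y2 : set (MR * MR)).
Proof.
have -> : rect x1 x2 y1 y2 =
    [set p | (x1 <= (p.1)%:E)%E] `&` [set p | ((p.1)%:E <= x2)%E] `&`
    ([set p | (y1 <= (p.2)%:E)%E] `&` [set p | ((p.2)%:E <= y2)%E]).
  apply/seteqP; split => p /=.
    by move=> [/andP[? ?] /andP[? ?]].
  by move=> [[? ?] [? ?]]; split; apply/andP.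
by apply: measurableI; apply: measurableI; apply: measurable_set_lee => //;
  try solve [exact: measurable_EFin_fst|exact: measurable_EFin_snd].
Qed.

Lemma measurable_strip (c d y0 : R) :
  measurable ([set q | c <= q.1 <= d /\ y0 <= q.2] : set (MR * MR)).
Proof.
have -> : [set q | c <= q.1 <= d /\ y0 <= q.2] =
    [set p | ((c%:E : \bar R) <= (p.1)%:E)%E] `&` [set p | ((p.1)%:E <= d%:E)%E]
    `&` [set p | ((y0%:E : \bar R) <= (p.2)%:E)%E].
  apply/seteqP; split => p /=; rewrite !lee_fin.
    by move=> [/andP[? ?] ?].
  by move=> [[? ?] ?]; split => //; apply/andP.
by apply: measurableI; first apply: measurableI; apply: measurable_set_lee => //;
  try solve [exact: measurable_EFin_fst|exact: measurable_EFin_snd].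
Qed.

(* Extends [h] outside [x0, x0 + a] by constants, so that a function that is
   only monotone on the interval becomes monotone (hence measurable) on R. *)
Definition clamp_fun (x0 a : R) (h : R -> R) x :=
  h (Num.min (Num.max x x0) (x0 + a)).

Lemma clamp_funE x0 a h x : x0 <= x <= x0 + a -> clamp_fun x0 a h x = h x.
Proof. by move=> /andP[h1 h2]; rewrite /clamp_fun (max_idPl h1) (min_idPl h2). Qed.

Lemma nonincreasing_clamp_fun x0 a h : 0 <= a -> nonincr_on x0 a h ->
  nonincreasing_fun (clamp_fun x0 a h).
Proof.
move=> a0 hni x y xy; rewrite /clamp_fun; apply: hni.
- by rewrite le_min le_max lexx /= lerDl a0 orbT.
- by apply: le_min2 => //; apply: le_max2.
- by rewrite ge_min lexx orbT.
Qed.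

Lemma measurable_clamp_fun x0 a h : 0 <= a -> nonincr_on x0 a h ->
  measurable_fun [set: MR] (clamp_fun x0 a h).
Proof.
by move=> a0 hni; apply: nonincreasing_measurable => //;
  exact: nonincreasing_clamp_fun.
Qed.

Lemma measurable_fun_nonincr_on (x0 a c d : R) (h : R -> R) : 0 <= a ->
  nonincr_on x0 a h -> x0 <= c -> d <= x0 + a ->
  measurable_fun (`]c, d[%classic : set MR) h.
Proof.
move=> a0 hni x0c da.
apply: (eq_measurable_fun (clamp_fun x0 a h)).
  move=> x /set_mem /=; rewrite in_itv /= => /andP[cx xd]; apply: clamp_funE.
  by rewrite (le_trans x0c (ltW cx)) (le_trans (ltW xd) da).
by apply: (measurable_funS measurableT) => //; exact: measurable_clamp_fun.
Qed.

Lemma measurable_region x0 y0 a h : 0 <= a -> nonincr_on x0 a h ->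
  measurable (region x0 y0 a h : set (MR * MR)).
Proof.
move=> a0 hni.
have -> : region x0 y0 a h =
    [set p | ((x0%:E : \bar R) <= (p.1)%:E)%E] `&` [set p | ((p.1)%:E <= (x0 + a)%:E)%E]
    `&` ([set p | ((y0%:E : \bar R) <= (p.2)%:E)%E] `&`
         [set p | ((p.2)%:E <= (clamp_fun x0 a h p.1)%:E)%E]).
  apply/seteqP; split => p /=; rewrite /region /= !lee_fin.
    by move=> [/andP[? ?] /andP[? ?]]; rewrite clamp_funE ?(introT andP (conj _ _)).
  move=> [[h1 h2] [h3]]; rewrite clamp_funE ?h1 ?h2 // => h4.
  by split; apply/andP.
apply: measurableI; apply: measurableI; apply: measurable_set_lee => //;
  try solve [exact: measurable_EFin_fst|exact: measurable_EFin_snd].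
apply: measurableT_comp => //; apply: measurableT_comp;
  first exact: (@measurable_clamp_fun x0 a h a0 hni).
exact: measurable_fst.
Qed.

End measurability.

Section slab_decomposition.
Context {R : realType}.
Notation MR := (measurableTypeR R).
Notation leb := (@lebesgue_measure R).

Lemma lam2_itv_cc (A : set (R * R)) (c d : R) :
  (forall p, A p -> c <= p.1 <= d) ->
  lam2 A = (\int[leb]_(x in `[c, d]) xsec_measure A x)%E.
Proof.
move=> Acd; rewrite lam2E [RHS]integral_mkcond; apply: eq_integral => x _.
rewrite patchE; case: ifPn => // xn.
rewrite /xsec_measure (_ : xsection _ _ = set0) ?measure0 //.
apply/seteqP; split => y // /=; rewrite /xsection /= inE => /Acd /= xcd.
by apply: (negP xn); apply: mem_set; rewrite /= in_itv /= xcd.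
Qed.

(* Open slabs suffice: the partition points form a Lebesgue-null set. *)
Lemma integral_itv_cc_path (F : MR -> \bar R) (q : seq R) (c : R) :
  measurable_fun setT F -> path <%R c q ->
  (\int[leb]_(x in `[c, last c q]) F x =
   \sum_(i < size q)
     \int[leb]_(x in `]nth 0%R (c :: q) i, nth 0%R (c :: q) i.+1[) F x)%E.
Proof.
move=> mF; elim: q c => [|d q IH] c /=.
  by move=> _; rewrite set_itv1 integral_set1 big_ord0.
move=> /andP[cd pq].
have de : d <= last d q.
  have := mem_last d q; rewrite inE => /predU1P[->//|].
  by move: (lt_path_min pq) => /allP dq /dq /ltW.
rewrite (@itv_bndbnd_setU _ _ _ (BRight d)); first last.
- by rewrite bnd_simp.
- by rewrite bnd_simp ltW.
rewrite integral_setU //; first last.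
- rewrite disj_set2E; apply/eqP; apply/seteqP; split => x //= [].
  by rewrite !in_itv /= => /andP[_ h1] /andP[h2 _]; move: (le_lt_trans h1 h2); rewrite ltxx.
- exact: measurable_funS mF.
rewrite big_ord_recl /=; congr (_ + _)%E.
  by rewrite integral_itv_bndoo //; exact: measurable_funS mF.
rewrite integral_itv_obnd_cbnd; last exact: measurable_funS mF.
by rewrite IH //; apply: eq_bigr => i _; rewrite add0n.
Qed.

Lemma lam2_path_partition (A : set (R * R)) (c : R) (q : seq R) :
  measurable (A : set (MR * MR)) -> path <%R c q ->
  (forall p, A p -> c <= p.1 <= last c q) ->
  lam2 A = (\sum_(i < size q)
    \int[leb]_(x in `]nth 0%R (c :: q) i, nth 0%R (c :: q) i.+1[) xsec_measure A x)%E.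
Proof.
move=> mA cq Ab; rewrite (lam2_itv_cc Ab).
exact: integral_itv_cc_path (measurable_xsec_measure mA) cq.
Qed.

End slab_decomposition.

Section windows.
Context {R : realType}.
Notation MR := (measurableTypeR R).
Notation leb := (@lebesgue_measure R).

Definition band (y1 y2 : \bar R) (y0 v : R) : set R :=
  [set y | (y1 <= y%:E <= y2)%E /\ y0 <= y <= v].

Lemma lebesgue_measure_itv_cc (u v : R) : u <= v -> leb `[u, v] = (v - u)%:E.
Proof.
move=> uv; rewrite lebesgue_measure_itv /= lte_fin.
case: ltP => [_|vu]; first by rewrite EFinB.
by rewrite (@le_anti _ _ v u) ?uv ?vu // subrr.
Qed.

Lemma lebesgue_measure_band_above y1 y2 y0 v : (v%:E <= y1)%E ->
  leb (band y1 y2 y0 v) = 0%E.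
Proof.
move=> vy1; have : band y1 y2 y0 v `<=` [set v].
  move=> y [/andP[h1 _] /andP[_ h2]] /=; apply/le_anti; rewrite h2 /=.
  by rewrite -lee_fin (le_trans vy1 h1).
by case/subset_set1 => ->; rewrite ?measure0 ?lebesgue_measure_set1.
Qed.

Lemma lebesgue_measure_band_inner (r1 r2 y0 v : R) :
  y0 <= r1 -> r1 <= r2 -> r2 <= v -> leb (band r1%:E r2%:E y0 v) = (r2 - r1)%:E.
Proof.
move=> y0r1 r12 r2v; rewrite -lebesgue_measure_itv_cc //; congr (leb _).
apply/seteqP; split => y /=; rewrite /band /= in_itv /= !lee_fin.
  by move=> [-> _].
move=> /andP[r1y yr2]; rewrite r1y yr2; split => //.
by rewrite (le_trans y0r1 r1y) (le_trans yr2 r2v).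
Qed.

Lemma lebesgue_measure_band_top (r1 y0 v : R) y2 :
  y0 <= r1 -> r1 <= v -> (v%:E <= y2)%E -> leb (band r1%:E y2 y0 v) = (v - r1)%:E.
Proof.
move=> y0r1 r1v vy2; rewrite -lebesgue_measure_itv_cc //; congr (leb _).
apply/seteqP; split => y /=; rewrite /band /= in_itv /= !lee_fin.
  by move=> [/andP[-> _] /andP[_ ->]].
move=> /andP[r1y yv]; rewrite r1y yv (le_trans y0r1 r1y) /=; split => //.
by rewrite (le_trans _ vy2) // lee_fin.
Qed.

(* Regions, their vertical strips and their intersections with rectangles are
   all windows. *)
Definition window (X : set R) (y1 y2 : \bar R) (a b y0 : R) (f : R -> R) :
    set (R * R) :=
  [set p | X p.1 /\ (y1 <= p.2%:E <= y2)%E /\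
           (a <= p.1 <= b /\ y0 <= p.2 <= f p.1)].

Lemma xsec_measure_window_in X y1 y2 a b y0 f (x : R) : X x -> a <= x <= b ->
  xsec_measure (window X y1 y2 a b y0 f) x = leb (band y1 y2 y0 (f x)).
Proof.
move=> Xx abx; rewrite /xsec_measure; congr (leb _).
apply/seteqP; split => y; rewrite /xsection /= inE /window /band /=.
  by move=> [_ [-> [_ ->]]].
by move=> [-> ->].
Qed.

Lemma xsec_measure_window_out X y1 y2 a b y0 f (x : R) : ~ X x ->
  xsec_measure (window X y1 y2 a b y0 f) x = 0%E.
Proof.
move=> Xx; rewrite /xsec_measure (_ : xsection _ _ = set0) ?measure0 //.
by apply/seteqP; split => y //; rewrite /xsection /= inE /window /= => -[].
Qed.

Lemma region_window x0 y0 a (f : R -> R) :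
  region x0 y0 a f = window setT y0%:E +oo x0 (x0 + a) y0 f.
Proof.
apply/seteqP; split => p; rewrite /region /window /=.
  by move=> [-> /andP[y0p ->]]; rewrite lee_fin y0p leey.
by move=> [_ [_ [-> ->]]].
Qed.

Lemma rect_region_window x0 y0 a (f : R -> R) x1 x2 y1 y2 :
  rect x1 x2 y1 y2 `&` region x0 y0 a f =
  window [set x | (x1 <= x%:E <= x2)%E] y1 y2 x0 (x0 + a) y0 f.
Proof.
apply/seteqP; split => p; rewrite /region /window /rect /=.
  by move=> [[hx hy] [hr1 hr2]].
by move=> [hx [hy [hr1 hr2]]].
Qed.

Lemma strip_region_window x0 y0 a (f : R -> R) c d :
  [set q | c <= q.1 <= d /\ y0 <= q.2] `&` region x0 y0 a f =
  window [set x | c <= x <= d] y0%:E +oo x0 (x0 + a) y0 f.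
Proof.
apply/seteqP; split => p; rewrite /region /window /=.
  by move=> [[-> _] [-> /andP[y0p ->]]]; rewrite lee_fin y0p leey.
by move=> [-> [_ [-> /andP[y0p ->]]]]; rewrite y0p.
Qed.

End windows.

Section window_on_slab.
Context {R : realType}.
Notation MR := (measurableTypeR R).
Notation leb := (@lebesgue_measure R).

Lemma fin_num_integral_itv_oo_cst (c d k : R) :
  (\int[leb]_(x in `]c, d[) (k%:E : \bar R))%E \is a fin_num.
Proof.
rewrite integral_cst //= lebesgue_measure_itv /=.
by case: ifP => _; rewrite ?mule0 // -EFinB -EFinM.
Qed.

Lemma integral_itv_oo_shift (c d y0 r : R) (f : R -> R) : y0 <= r ->
  (forall x, c < x < d -> r <= f x) -> measurable_fun (`]c, d[%classic : set MR) f ->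
  (\int[leb]_(x in `]c, d[) (f x - y0)%:E =
   \int[leb]_(x in `]c, d[) (f x - r)%:E +
   \int[leb]_(x in `]c, d[) ((r - y0)%:E : \bar R))%E.
Proof.
move=> y0r fr mf; rewrite -ge0_integralD //.
- by apply: eq_integral => x _; rewrite -EFinD addrA subrK.
- by move=> x /= /[!in_itv] /= /fr; rewrite lee_fin subr_ge0.
- by apply: measurableT_comp => //; apply: measurable_funB.
- by move=> x _; rewrite lee_fin subr_ge0.
Qed.

Definition same_side (c d : R) (f g : R -> R) (y : \bar R) :=
  (forall x, c < x < d -> (y <= (f x)%:E)%E /\ (y <= (g x)%:E)%E) \/
  (forall x, c < x < d -> ((f x)%:E <= y)%E /\ ((g x)%:E <= y)%E).

Variables (a b c d y0 : R) (X : set R) (y1 y2 : \bar R) (f g : R -> R).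
Hypotheses (ac : a <= c) (db : d <= b) (y0y1 : (y0%:E <= y1)%E) (y12 : (y1 <= y2)%E).
Hypotheses (side1 : same_side c d f g y1) (side2 : same_side c d f g y2).
Hypotheses (mf : measurable_fun (`]c, d[%classic : set MR) f)
           (mg : measurable_fun (`]c, d[%classic : set MR) g).
Hypothesis fg : (\int[leb]_(x in `]c, d[) (f x - y0)%:E =
                 \int[leb]_(x in `]c, d[) (g x - y0)%:E)%E.

Let inab x : c < x < d -> a <= x <= b.
Proof. by move=> /andP[cx xd]; rewrite (le_trans ac (ltW cx)) (le_trans (ltW xd) db). Qed.

(* Over ]c, d[ the section of the window has length [0], [y2 - y1] or
   [f x - y1]; only the last depends on [f], and its integral is determined by
   that of [f - y0]. *)
Lemma integral_xsec_window_in : (forall x, c < x < d -> X x) ->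
  (\int[leb]_(x in `]c, d[) xsec_measure (window X y1 y2 a b y0 f) x =
   \int[leb]_(x in `]c, d[) xsec_measure (window X y1 y2 a b y0 g) x)%E.
Proof.
move=> Xin.
have secE u v (k : R -> R) x : c < x < d ->
    xsec_measure (window X u v a b y0 k) x = leb (band u v y0 (k x)).
  by move=> xcd; rewrite xsec_measure_window_in //; [exact: Xin|exact: inab].
case: side1 => [below1|above1]; last first.
  rewrite !integral0_eq // => x /= /[!in_itv] /= xcd; rewrite secE //;
  by apply: lebesgue_measure_band_above; case: (above1 _ xcd).
case: y1 y0y1 y12 below1 => [r1| |] // y0r1 r1y2 below1; last first.
  rewrite !integral0_eq // => x /= /[!in_itv] /= xcd; rewrite secE //;
  by apply: lebesgue_measure_band_above; rewrite leey.
rewrite lee_fin in y0r1.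
have r1f x : c < x < d -> r1 <= f x by move=> /below1 [+ _]; rewrite lee_fin.
have r1g x : c < x < d -> r1 <= g x by move=> /below1 [_ +]; rewrite lee_fin.
case: side2 => [below2|above2].
  case: y2 r1y2 below2 => [r2| |] // r12 below2; last first.
    by rewrite !integral0_eq // => x /= /[!in_itv] /= xcd; case: (below2 _ xcd).
  rewrite lee_fin in r12.
  have inner (k : R -> R) : (forall x, c < x < d -> r2 <= k x) ->
      (\int[leb]_(x in `]c, d[) xsec_measure (window X r1%:E r2%:E a b y0 k) x =
       \int[leb]_(x in `]c, d[) ((r2 - r1)%:E : \bar R))%E.
    move=> r2k; apply: eq_integral => x /set_mem /= /[!in_itv] /= xcd.
    by rewrite secE // lebesgue_measure_band_inner // r2k.
  rewrite !inner // => x /below2 []; rewrite lee_fin //.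
have top (k : R -> R) : (forall x, c < x < d -> r1 <= k x /\ ((k x)%:E <= y2)%E) ->
    (\int[leb]_(x in `]c, d[) xsec_measure (window X r1%:E y2 a b y0 k) x =
     \int[leb]_(x in `]c, d[) (k x - r1)%:E)%E.
  move=> kb; apply: eq_integral => x /set_mem /= /[!in_itv] /= xcd.
  by have [? ?] := kb x xcd; rewrite secE // lebesgue_measure_band_top.
rewrite !top; first last.
- by move=> x xcd; split; [exact: r1f|case: (above2 _ xcd)].
- by move=> x xcd; split; [exact: r1g|case: (above2 _ xcd)].
move: fg; rewrite (integral_itv_oo_shift y0r1 r1f mf) (integral_itv_oo_shift y0r1 r1g mg).
have K := fin_num_integral_itv_oo_cst c d (r1 - y0).
by move=> efg; rewrite -[LHS](addeK _ K) efg addeK.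
Qed.

Lemma integral_xsec_window :
  (forall x, c < x < d -> X x) \/ (forall x, c < x < d -> ~ X x) ->
  (\int[leb]_(x in `]c, d[) xsec_measure (window X y1 y2 a b y0 f) x =
   \int[leb]_(x in `]c, d[) xsec_measure (window X y1 y2 a b y0 g) x)%E.
Proof.
case=> [|Xout]; first exact: integral_xsec_window_in.
by rewrite !integral0_eq // => x /= /[!in_itv] /= /Xout; exact: xsec_measure_window_out.
Qed.

End window_on_slab.

Section level_side.
Context {R : realType}.
Variables (x0 a y0 c d : R) (h0 h : R -> R).
Hypotheses (h0_ni : nonincr_on x0 a h0) (h0_lc : leftcont_on x0 a h0).
Hypotheses (x0c : x0 <= c) (cd : c < d) (da : d <= x0 + a).
Hypothesis h_slab : forall x, c < x <= d -> h0 d <= h x <= rlim h0 c.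

Lemma rlim_le r : (forall x, c < x < d -> h0 x <= r) -> rlim h0 c <= r.
Proof.
move=> h0r.
have h0_ni_cd : {in `]c, d[ &, nonincreasing_fun h0}.
  move=> u v /[!in_itv] /= /andP[cu ud] /andP[cv vd] uv; apply: h0_ni => //.
    exact: le_trans x0c (ltW cu).
  exact: le_trans (ltW vd) da.
have h0_bnd : has_ubound (h0 @` `]c, d[).
  exists (h0 c) => _ [u /= /[!in_itv] /= /andP[cu ud] <-]; apply: h0_ni => //.
    exact: ltW.
  exact: le_trans (ltW ud) da.
have cv := @nonincreasing_at_right_cvgr R h0 c (BLeft d).
have {}cv := cv (ltac:(by rewrite bnd_simp)) h0_ni_cd h0_bnd.
rewrite /rlim (cvg_lim _ cv) //; apply: (cvgr_to_le cv).
near=> t; apply: h0r; apply/andP; split.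
  by near: t; exact: nbhs_right_gt.
by near: t; exact: nbhs_right_lt.
Unshelve. all: by end_near.
Qed.

Lemma le_leftcont r : (forall x, c < x < d -> r <= h0 x) -> r <= h0 d.
Proof.
move=> rh0; have /h0_lc cv : x0 < d <= x0 + a by rewrite da (le_lt_trans x0c cd).
apply: (cvgr_to_ge cv); near=> t; apply: rh0; apply/andP; split.
  by near: t; exact: nbhs_left_gt.
by near: t; exact: nbhs_left_lt.
Unshelve. all: by end_near.
Qed.

Lemma same_side_below (y : \bar R) : (y0%:E <= y)%E ->
  (forall x, c < x < d -> ((h0 x)%:E <= y)%E) -> same_side c d h h0 y.
Proof.
move=> y0y h0y; right => x xcd; split; last exact: h0y.
case: y y0y h0y => [r| |] // _ h0r; last by rewrite leey.
case/andP: (xcd) => cx xd; have /andP[_ hx] := h_slab (introT andP (conj cx (ltW xd))).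
by rewrite lee_fin (le_trans hx) // rlim_le // => t /h0r; rewrite lee_fin.
Qed.

Lemma same_side_above (y : \bar R) : (y <= (h0 d)%:E)%E -> same_side c d h h0 y.
Proof.
move=> yh0; left => x /andP[cx xd]; split; apply: le_trans yh0 _; rewrite lee_fin.
  by case/andP: (h_slab (introT andP (conj cx (ltW xd)))).
by apply: h0_ni; [exact: le_trans x0c (ltW cx)|exact: ltW|].
Qed.

(* The level [y] can only cross the graph of [h0] at [hinv y]; when this
   point is not inside ]c, d[, bound (b) keeps [h] on the same side. *)
Lemma same_side_hinv (y : \bar R) : (y0%:E <= y)%E ->
  (hinv_set x0 a h0 y !=set0 -> hinv x0 a h0 y <= c \/ d <= hinv x0 a h0 y) ->
  same_side c d h h0 y.
Proof.
move=> y0y hinv_out; set S := hinv_set x0 a h0 y.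
have inS x : c < x < d -> (y <= (h0 x)%:E)%E -> S x.
  by move=> /andP[cx xd] yx; split; rewrite ?(le_trans x0c (ltW cx)) ?(le_trans (ltW xd) da).
have [Sn|S0] := pselect (S !=set0); last first.
  apply: same_side_below => // x xcd; rewrite leNgt; apply/negP => /ltW yx.
  by apply: S0; exists x; exact: inS.
have hsS : has_sup S by split => //; exists (x0 + a) => u [/andP[_ ?] _].
have [hc|dh] := hinv_out Sn.
  apply: same_side_below => // x xcd; rewrite leNgt; apply/negP => /ltW yx.
  have := sup_upper_bound hsS (inS x xcd yx); rewrite -/(hinv x0 a h0 y).
  by case/andP: xcd => cx _ xh; move: (le_trans xh hc); rewrite leNgt cx.
apply: same_side_above.
have [r yE] : exists r, y = r%:E.
  case: Sn => z [_ yz]; move: y0y yz.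
  by case: (y) => [r' _ _| |//]; [exists r'|rewrite leye_eq].
rewrite yE lee_fin; apply: le_leftcont => t /andP[ct td].
have gap : 0 < hinv x0 a h0 y - t by rewrite subr_gt0 (lt_le_trans td dh).
have [z [/andP[_ za] rz] tz] := sup_adherent gap hsS.
move: tz rz; rewrite -/(hinv x0 a h0 y) opprB addrC subrK yE lee_fin => tz rz.
by apply: le_trans rz _; apply: h0_ni => //; [exact: le_trans x0c (ltW ct)|exact: ltW].
Qed.

End level_side.

Section partitions.
Context {R : realType}.

Lemma sorted_nth_gap (s : seq R) i t : sorted <%R s -> (i.+1 < size s)%N ->
  t \in s -> t <= nth 0 s i \/ nth 0 s i.+1 <= t.
Proof.
move=> ss iS ts; rewrite -(nth_index 0 ts).
have index_lt := ts; rewrite -index_mem in index_lt.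
have iS' : (i < size s)%N := ltn_trans (ltnSn i) iS.
case: (leqP (index t s) i) => ti; [left|right];
  by rewrite (lt_sorted_leq_nth 0 ss) ?inE.
Qed.

Lemma path_rcons_between (c b : R) (s : seq R) :
  (forall t, t \in s -> c < t < b) -> sorted <%R s -> c < b -> path <%R c (rcons s b).
Proof.
move=> s_cb ss cb; rewrite rcons_path; apply/andP; split.
  by rewrite path_min_sorted //; apply/allP => t /s_cb /andP[].
by have := mem_last c s; rewrite inE => /predU1P[->//|/s_cb /andP[]].
Qed.

Lemma ereal_outside_gap (c b u v : R) (e : \bar R) : c <= u -> v <= b ->
  (c%:E <= e)%E -> (forall r, e = r%:E -> c < r < b -> r <= u \/ v <= r) ->
  (e <= u%:E)%E \/ (v%:E <= e)%E.
Proof.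
move=> cu vb; case: e => [r| |] //; last by right; rewrite leey.
rewrite !lee_fin => cr gap.
have [rc|cr'] := leP r c; first by left; exact: le_trans rc cu.
have [br|rb] := leP b r; first by right; exact: le_trans vb br.
by apply: gap => //; rewrite cr' rb.
Qed.

End partitions.

Section rearrangement.
Context {R : realType}.
Notation MR := (measurableTypeR R).
Notation leb := (@lebesgue_measure R).
Variables (x0 y0 a : R) (h0 h : R -> R) (xs : seq R).
Hypotheses (a_gt0 : 0 < a) (h0_ni : nonincr_on x0 a h0) (h0_lc : leftcont_on x0 a h0)
  (h_ni : nonincr_on x0 a h).
Hypothesis h0_ge : forall x, x0 <= x <= x0 + a -> y0 <= h0 x.
Hypotheses (xs_sorted : sorted <%R xs) (xs_itv : forall t, t \in xs -> x0 < t < x0 + a).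

Local Notation pt i := (nth 0 (x0 :: rcons xs (x0 + a)) i).

Hypothesis h_int : forall i, (i < (size xs).+1)%N ->
  integ (pt i) (pt i.+1) (fun x => h x - y0) =
  lam2 ([set q | pt i <= q.1 <= pt i.+1 /\ y0 <= q.2] `&` region x0 y0 a h0).
Hypothesis h_slab : forall i, (i < (size xs).+1)%N ->
  forall x, pt i < x <= pt i.+1 -> h0 (pt i.+1) <= h x <= rlim h0 (pt i).

Let path_partition : path <%R x0 (rcons xs (x0 + a)).
Proof. by apply: path_rcons_between => //; rewrite ltrDl. Qed.

Let size_partition : size (rcons xs (x0 + a)) = (size xs).+1.
Proof. exact: size_rcons. Qed.

Lemma slab_itv i : (i < (size xs).+1)%N ->
  [/\ x0 <= pt i, pt i < pt i.+1 & pt i.+1 <= x0 + a].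
Proof.
move=> iS; have ss : sorted <%R (x0 :: rcons xs (x0 + a)) := path_partition.
have last_pt : pt (size xs).+1 = x0 + a by rewrite /= nth_rcons ltnn eqxx.
have lt_size j : (j <= (size xs).+1)%N ->
    j \in [pred n | (n < size (x0 :: rcons xs (x0 + a)%R))%N].
  by rewrite inE /= size_partition ltnS.
split.
- by have /= -> := lt_sorted_leq_nth 0 ss (lt_size 0%N isT) (lt_size i (ltnW iS)).
- by rewrite (lt_sorted_ltn_nth 0 ss (lt_size i (ltnW iS)) (lt_size i.+1 iS)).
- have := lt_sorted_leq_nth 0 ss (lt_size i.+1 iS) (lt_size _ (leqnn _)).
  by rewrite last_pt => ->.
Qed.

Lemma slab_gap i t : (i < (size xs).+1)%N -> t \in xs -> t <= pt i \/ pt i.+1 <= t.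
Proof.
move=> iS txs; apply: sorted_nth_gap; first exact: path_partition.
  by rewrite /= size_partition ltnS.
by rewrite inE mem_rcons inE txs !orbT.
Qed.

Lemma measurable_fun_slab (f : R -> R) i : nonincr_on x0 a f -> (i < (size xs).+1)%N ->
  measurable_fun (`]pt i, pt i.+1[%classic : set MR) f.
Proof.
by move=> f_ni /slab_itv[x0c _ da]; exact: measurable_fun_nonincr_on (ltW a_gt0) f_ni x0c da.
Qed.

Lemma integral_slab i : (i < (size xs).+1)%N ->
  (\int[leb]_(x in `]pt i, pt i.+1[) (h x - y0)%:E =
   \int[leb]_(x in `]pt i, pt i.+1[) (h0 x - y0)%:E)%E.
Proof.
move=> iS; have [x0c cd da] := slab_itv iS.
have mB f : nonincr_on x0 a f ->
    measurable_fun (`]pt i, pt i.+1[%classic : set MR) (fun x => (f x - y0)%:E).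
  by move=> f_ni; apply: measurableT_comp => //; apply: measurable_funB => //;
    exact: measurable_fun_slab.
transitivity (integ (pt i) (pt i.+1) (fun x => h x - y0)).
  by rewrite /integ integral_itv_bndoo //; exact: mB.
rewrite h_int //.
rewrite strip_region_window (lam2_itv_cc (c := pt i) (d := pt i.+1)); last first.
  by move=> q [/= + _].
rewrite integral_itv_bndoo; last first.
  apply: (measurable_funS measurableT) => //; apply: measurable_xsec_measure.
  rewrite -strip_region_window; apply: measurableI; first exact: measurable_strip.
  exact: measurable_region (ltW a_gt0) h0_ni.
apply: eq_integral => x /set_mem /=; rewrite in_itv /= => /andP[cx xd].
have x0x : x0 <= x <= x0 + a by rewrite (le_trans x0c (ltW cx)) (le_trans (ltW xd) da).
rewrite xsec_measure_window_in //; last by rewrite /= (ltW cx) (ltW xd).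
by apply: lebesgue_measure_band_top => //; [exact: h0_ge|rewrite leey].
Qed.

Lemma lam2_window_eq (X : set R) (y1 y2 : \bar R) :
  measurable (window X y1 y2 x0 (x0 + a) y0 h : set (MR * MR)) ->
  measurable (window X y1 y2 x0 (x0 + a) y0 h0 : set (MR * MR)) ->
  (forall i, (i < (size xs).+1)%N ->
     (forall x, pt i < x < pt i.+1 -> X x) \/ (forall x, pt i < x < pt i.+1 -> ~ X x)) ->
  (y0%:E <= y1)%E -> (y1 <= y2)%E ->
  (forall i, (i < (size xs).+1)%N -> same_side (pt i) (pt i.+1) h h0 y1) ->
  (forall i, (i < (size xs).+1)%N -> same_side (pt i) (pt i.+1) h h0 y2) ->
  lam2 (window X y1 y2 x0 (x0 + a) y0 h) = lam2 (window X y1 y2 x0 (x0 + a) y0 h0).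
Proof.
move=> mWh mWh0 X_slab y0y1 y12 side1 side2.
have inW f p : window X y1 y2 x0 (x0 + a) y0 f p ->
    x0 <= p.1 <= last x0 (rcons xs (x0 + a)).
  by move=> [_ [_ [+ _]]]; rewrite last_rcons.
rewrite (lam2_path_partition mWh path_partition (inW h)).
rewrite (lam2_path_partition mWh0 path_partition (inW h0)).
apply: eq_bigr => -[i iq] _ /=; have iS : (i < (size xs).+1)%N by rewrite -size_partition.
have [x0c _ da] := slab_itv iS.
apply: integral_xsec_window x0c da y0y1 y12 (side1 i iS) (side2 i iS) _ _ _ (X_slab i iS).
- exact: measurable_fun_slab.
- exact: measurable_fun_slab.
- exact: integral_slab.
Qed.

Lemma same_side_slab (y : \bar R) : (y0%:E <= y)%E ->
  (hinv_set x0 a h0 y !=set0 -> x0 < hinv x0 a h0 y < x0 + a -> hinv x0 a h0 y \in xs) ->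
  forall i, (i < (size xs).+1)%N -> same_side (pt i) (pt i.+1) h h0 y.
Proof.
move=> y0y hinv_xs i iS; have [x0c cd da] := slab_itv iS.
apply: (same_side_hinv h0_ni h0_lc x0c cd da (h_slab iS) y0y) => Sn.
set s := hinv x0 a h0 y.
have [sx0|x0s] := leP s x0; first by left; exact: le_trans sx0 x0c.
have [ge_s|sa] := leP (x0 + a) s; first by right; exact: le_trans da ge_s.
by apply: slab_gap iS _; apply: hinv_xs => //; rewrite x0s sa.
Qed.

Lemma xrange_slab (e1 e2 : \bar R) : (x0%:E <= e1 <= e2)%E ->
  (forall r, e1 = r%:E \/ e2 = r%:E -> x0 < r < x0 + a -> r \in xs) ->
  forall i, (i < (size xs).+1)%N ->
  (forall x, pt i < x < pt i.+1 -> (e1 <= x%:E <= e2)%E) \/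
  (forall x, pt i < x < pt i.+1 -> ~ (e1 <= x%:E <= e2)%E).
Proof.
move=> /andP[x0e1 e12] e_xs i iS; have [x0c _ da] := slab_itv iS.
have gap e : (x0%:E <= e)%E -> (forall r, e = r%:E -> x0 < r < x0 + a -> r \in xs) ->
    (e <= (pt i)%:E)%E \/ ((pt i.+1)%:E <= e)%E.
  move=> x0e exs; apply: ereal_outside_gap x0c da x0e _ => r er rin.
  exact: slab_gap iS (exs r er rin).
have [e1c|de1] := gap e1 x0e1 (fun r E => e_xs r (or_introl E)); last first.
  right => x /andP[_ xd] /andP[e1x _].
  by move: (le_trans de1 e1x); rewrite lee_fin leNgt xd.
have [e2c|de2] := gap e2 (le_trans x0e1 e12) (fun r E => e_xs r (or_intror E)).
  right => x /andP[cx _] /andP[_ xe2].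
  by move: (le_trans xe2 e2c); rewrite lee_fin leNgt cx.
left => x /andP[cx xd]; apply/andP; split.
  by apply: le_trans e1c _; rewrite lee_fin ltW.
by apply: le_trans de2; rewrite lee_fin ltW.
Qed.

Lemma lam2_region_eq : lam2 (region x0 y0 a h) = lam2 (region x0 y0 a h0).
Proof.
rewrite !region_window; apply: lam2_window_eq => //.
- by rewrite -region_window; exact: measurable_region (ltW a_gt0) h_ni.
- by rewrite -region_window; exact: measurable_region (ltW a_gt0) h0_ni.
- by left.
- by rewrite leey.
- move=> i iS; left => x /andP[cx xd]; have [x0c cd da] := slab_itv iS.
  have x0x : x0 <= x <= x0 + a by rewrite (le_trans x0c (ltW cx)) (le_trans (ltW xd) da).
  have x0d : x0 <= pt i.+1 <= x0 + a by rewrite da (le_trans x0c (ltW cd)).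
  have /andP[hdx _] := h_slab iS (introT andP (conj cx (ltW xd))).
  by rewrite !lee_fin h0_ge // (le_trans (h0_ge x0d) hdx).
- by move=> i _; right => x _; rewrite !leey.
Qed.

Lemma lam2_rect_region_eq (x1 x2 y1 y2 : \bar R) :
  (x0%:E <= x1 <= x2)%E -> (y0%:E <= y1 <= y2)%E ->
  (forall r, x1 = r%:E \/ x2 = r%:E -> x0 < r < x0 + a -> r \in xs) ->
  (forall y, y = y1 \/ y = y2 -> hinv_set x0 a h0 y !=set0 ->
     x0 < hinv x0 a h0 y < x0 + a -> hinv x0 a h0 y \in xs) ->
  lam2 (rect x1 x2 y1 y2 `&` region x0 y0 a h) =
  lam2 (rect x1 x2 y1 y2 `&` region x0 y0 a h0).
Proof.
move=> x12 /andP[y0y1 y12] x_xs y_xs; rewrite !rect_region_window.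
apply: lam2_window_eq => //.
- rewrite -rect_region_window; apply: measurableI; first exact: measurable_rect.
  exact: measurable_region (ltW a_gt0) h_ni.
- rewrite -rect_region_window; apply: measurableI; first exact: measurable_rect.
  exact: measurable_region (ltW a_gt0) h0_ni.
- exact: xrange_slab.
- by apply: same_side_slab => //; apply: y_xs; left.
- by apply: same_side_slab; [exact: le_trans y12|apply: y_xs; right].
Qed.

End rearrangement.

Lemma KX_region_le {R : realType} (x0 y0 a : R) (f : R -> R) :
  (KX x0 y0 (region x0 y0 a f) <= a%:E)%E.
Proof.
rewrite /KX leeBlDr // -EFinD addrC; apply: ge_ereal_sup.
by move=> _ [x [/andP[_ xa] _] <-]; rewrite lee_fin.
Qed.

Lemma KY_region_le {R : realType} (x0 y0 a : R) (f : R -> R) :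
  (KY x0 y0 (region x0 y0 a f) <= (f x0 - y0)%:E)%E.
Proof.
rewrite /KY leeBlDr // -EFinD subrK; apply: ge_ereal_sup.
by move=> _ [y [_ /andP[_ yf]] <-]; rewrite lee_fin.
Qed.

Theorem mainTheorem6 (R : realType) (x0 y0 : R) (R0 : set (R * R))
    (RX RY : R) (h0 : R -> R)
    (n : nat) (x1 x2 y1 y2 : 'I_n -> \bar R)
    (xs : seq R) (h : R -> R) :
  closed R0 -> OU x0 y0 R0 ->
  (0 < lam2 R0)%E -> (lam2 R0 < +oo)%E ->
  KX x0 y0 R0 = RX%:E -> 0 < RX ->
  KY x0 y0 R0 = RY%:E -> 0 < RY ->
  nonincr_on x0 RX h0 -> leftcont_on x0 RX h0 ->
  (forall x, x0 <= x <= x0 + RX -> y0 <= h0 x <= y0 + RY) ->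
  h0 x0 = y0 + RY ->
  R0 = region x0 y0 RX h0 ->
  (forall i, (x0%:E <= x1 i <= x2 i)%E /\ (y0%:E <= y1 i <= y2 i)%E) ->
  sorted <%R xs ->
  (forall t, t \in xs <->
     (x0 < t < x0 + RX /\
      exists i, x1 i = t%:E \/ x2 i = t%:E \/
        (hinv_set x0 RX h0 (y1 i) !=set0 /\ hinv x0 RX h0 (y1 i) = t) \/
        (hinv_set x0 RX h0 (y2 i) !=set0 /\ hinv x0 RX h0 (y2 i) = t))) ->
  (forall x, x0 <= x <= x0 + RX -> y0 <= h x <= y0 + RY) ->
  (let p := x0 :: rcons xs (x0 + RX) in
   forall i, (i < (size xs).+1)%N ->
     integ (nth 0 p i) (nth 0 p i.+1) (fun x => h x - y0) =
       lam2 ([set q | nth 0 p i <= q.1 <= nth 0 p i.+1 /\ y0 <= q.2] `&` R0)) ->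
  (let p := x0 :: rcons xs (x0 + RX) in
   forall i, (i < (size xs).+1)%N ->
     forall x, nth 0 p i < x <= nth 0 p i.+1 ->
       h0 (nth 0 p i.+1) <= h x <= rlim h0 (nth 0 p i)) ->
  nonincr_on x0 RX h -> leftcont_on x0 RX h ->
  h t @[t --> x0^'+] --> h x0 ->
  let Rh := region x0 y0 RX h in
  lam2 Rh = lam2 R0 /\
  (KX x0 y0 Rh <= KX x0 y0 R0)%E /\
  (KY x0 y0 Rh <= KY x0 y0 R0)%E /\
  (forall i, lam2 (rect (x1 i) (x2 i) (y1 i) (y2 i) `&` Rh) =
             lam2 (rect (x1 i) (x2 i) (y1 i) (y2 i) `&` R0)).
Proof.
move=> _ _ _ _ KXR0 RX_gt0 KYR0 _ h0_ni h0_lc h0_bnd _ R0E rect_bnd xs_sorted xs_spec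
  h_bnd h_int h_slab h_ni _ _ Rh; subst R0.
have xs_itv t : t \in xs -> x0 < t < x0 + RX by case/xs_spec.
have h0_ge x : x0 <= x <= x0 + RX -> y0 <= h0 x by case/h0_bnd/andP.
have x0_in : x0 <= x0 <= x0 + RX by rewrite lexx lerDl ltW.
split; [|split; [|split]].
- exact: (lam2_region_eq RX_gt0 h0_ni h_ni h0_ge xs_sorted xs_itv h_int h_slab).
- by rewrite KXR0 KX_region_le.
- rewrite KYR0 (le_trans (KY_region_le _ _ _ _)) // lee_fin lerBlDl.
  by case/andP: (h_bnd x0 x0_in).
- move=> k; have [x12 y12] := rect_bnd k.
  apply: (lam2_rect_region_eq RX_gt0 h0_ni h0_lc h_ni h0_ge xs_sorted xs_itv h_int h_slab x12 y12).
  + by move=> r rk r_in; apply/xs_spec; split => //; exists k; case: rk; auto.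
  + move=> y yk Sn r_in; apply/xs_spec; split => //; exists k.
    by case: yk => yk; subst y; [right; right; left|right; right; right].
Qed.
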